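(* Let $F$ be the elementary cellular automaton with rule number 156. For every nonempty finite word $u\in\{0,1\}^*$, the deterministic communication complexity of $\textsc{SInv}_{F,u}$ restricted to inputs of length $n$ is bounded by a constant independent of $n$.
   Context: An elementary cellular automaton (ECA) with rule number $N\in\{0,\dots,255\}$ is the map $F:\{0,1\}^{\mathbb Z}\to\{0,1\}^{\mathbb Z}$ given by $F(x)_i=f(x_{i-1},x_i,x_{i+1})$. Here the local rule $f:\{0,1\}^3\to\{0,1\}$ is determined by $N=\sum_{a,b,c\in\{0,1\}}2^{4a+2b+c}f(a,b,c)$. For a nonempty finite word $u$, $p_u\in\{0,1\}^{\mathbb Z}$ is defined by $(p_u)_i=u_{i\bmod |u|}$. For a finite word $x$, $p_u[x]$ is the configuration equal to $x$ on positions $0,\dots,|x|-1$ and to $p_u$ elsewhere. $\textsc{SInv}_{F,u}$ is the decision problem: on input a finite word $x$, decide whether there is an integer $w$ such that for all $t\ge0$ the set of positions where $F^t(p_u)$ and $F^t(p_u[x])$ differ is contained in an interval of length $w$. For each $n$, it is regarded as a function $\{0,1\}^n\to\{0,1\}$. For a function $g:X\times Y\to Z$, $D(g)$ is the minimal depth of a deterministic two-party protocol computing $g$. In such a protocol, Alice knows $x$ and Bob knows $y$. The protocol is a binary tree: each internal node is labelled by a function of Alice's input only or of Bob's input only, with values in $\{\text{left},\text{right}\}$, and each leaf is labelled by an output value. For $g:\{0,1\}^m\to Z$, set $D(g)=\max_{0\le i<m}D(g_i)$, where $g_i:\{0,1\}^i\times\{0,1\}^{m-i}\to Z$ is $g_i(x,y)=g(xy)$.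 *)

From Stdlib Require Import ZArith List Bool.
Import ListNotations.
Open Scope Z_scope.

Definition config := Z -> bool.

Definition local_rule (N : Z) (a b c : bool) : bool :=
  Z.testbit N (4 * Z.b2z a + 2 * Z.b2z b + Z.b2z c).

Definition eca (N : Z) (x : config) : config :=
  fun i => local_rule N (x (i - 1)) (x i) (x (i + 1)).

Definition eca_iter (N : Z) (t : nat) (x : config) : config :=
  Nat.iter t (eca N) x.

Definition periodic (u : list bool) : config :=
  fun i => nth (Z.to_nat (i mod Z.of_nat (length u))) u false.

Definition patch (u x : list bool) : config :=
  fun i => if (0 <=? i) && (i <? Z.of_nat (length x))
           then nth (Z.to_nat i) x false
           else periodic u i.

Definition SInv (N : Z) (u x : list bool) : Prop :=
  exists w : Z, forall t : nat, exists a : Z, forall i : Z,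
    eca_iter N t (periodic u) i <> eca_iter N t (patch u x) i ->
    a <= i < a + w.

Inductive protocol (X Y : Type) : Type :=
| Leaf : bool -> protocol X Y
| AliceNode : (X -> bool) -> protocol X Y -> protocol X Y -> protocol X Y
| BobNode : (Y -> bool) -> protocol X Y -> protocol X Y -> protocol X Y.
Arguments Leaf {X Y}.
Arguments AliceNode {X Y}.
Arguments BobNode {X Y}.

(** Depth of the tree (a leaf has depth 0).  The label value [true]
    means "left", [false] means "right". *)
Fixpoint depth {X Y} (p : protocol X Y) : nat :=
  match p with
  | Leaf _ => 0
  | AliceNode _ l r | BobNode _ l r => S (Nat.max (depth l) (depth r))
  end.

Fixpoint run {X Y} (p : protocol X Y) (x : X) (y : Y) : bool :=
  match p with
  | Leaf b => b
  | AliceNode f l r => if f x then run l x y else run r x y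
  | BobNode g l r => if g y then run l x y else run r x y
  end.

(** D(g_i) <= C for g = P restricted to words of length n, split at i:
    a protocol of depth <= C whose output on (x,y) with |x| = i,
    |y| = n - i is true exactly when P (x ++ y) holds. *)
Definition CC_split_le (P : list bool -> Prop) (n i C : nat) : Prop :=
  exists p : protocol (list bool) (list bool),
    (depth p <= C)%nat /\
    forall x y : list bool,
      length x = i -> length y = (n - i)%nat ->
      (run p x y = true <-> P (x ++ y)).

(** D(g) <= C for g = P on {0,1}^n: D(g) = max_{0<=i<n} D(g_i). *)
Definition CC_le (P : list bool -> Prop) (n C : nat) : Prop :=
  forall i : nat, (i < n)%nat -> CC_split_le P n i C.

(* Rule 156 is f(a,b,c) = b xor (a and not c).  It fixes both constant
   configurations, and is conjugate to itself under complement composed with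
   the mirror i |-> -i.

   On the background 0, a finite set of 1s keeps its leftmost 1 in place while
   its rightmost 1 moves one step right per generation, so the perturbation
   spreads unboundedly; dually on the background 1.  Hence for a constant
   background SInv(x) holds iff x contains no letter differing from the
   background, which two bits of communication decide.  If p_u is not constant
   it contains a wall "01" in every period; walls are preserved by the rule and
   block information, so walls on both sides of x confine every difference
   forever and SInv is always true. *)

From Stdlib Require Import ZArith List Bool Lia Classical.
Open Scope Z_scope.

Lemma local_rule_156 a b c : local_rule 156 a b c = xorb b (a && negb c).
Proof. destruct a, b, c; reflexivity. Qed.

Lemma eca_iterS N t X : eca_iter N (S t) X = eca N (eca_iter N t X).
Proof. reflexivity. Qed.

Lemma eca_iter_ext N t X Y :
  (forall i, X i = Y i) -> forall i, eca_iter N t X i = eca_iter N t Y i.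
Proof.
  intros HXY. induction t as [|t IH]; intros i; [apply HXY|].
  rewrite !eca_iterS. unfold eca. rewrite !IH. reflexivity.
Qed.

Lemma eca156_iter_const b t i : eca_iter 156 t (fun _ => b) i = b.
Proof.
  revert i. induction t as [|t IH]; intros i; [reflexivity|].
  rewrite eca_iterS. unfold eca. rewrite local_rule_156, !IH. now destruct b.
Qed.

Definition mirror_neg (X : config) : config := fun i => negb (X (- i)).

Lemma eca156_mirror_neg X i : eca 156 (mirror_neg X) i = mirror_neg (eca 156 X) i.
Proof.
  unfold eca, mirror_neg. rewrite !local_rule_156.
  replace (- (i - 1)) with (- i + 1) by lia. replace (- (i + 1)) with (- i - 1) by lia.
  destruct (X (- i + 1)), (X (- i)), (X (- i - 1)); reflexivity.
Qed.

Lemma eca156_iter_mirror_neg t X i :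
  eca_iter 156 t (mirror_neg X) i = mirror_neg (eca_iter 156 t X) i.
Proof.
  revert i. induction t as [|t IH]; intros i; [reflexivity|].
  rewrite !eca_iterS, <- eca156_mirror_neg. unfold eca. rewrite !IH. reflexivity.
Qed.


Lemma patch_outside u x i :
  i < 0 \/ Z.of_nat (length x) <= i -> patch u x i = periodic u i.
Proof.
  intros Hi. unfold patch.
  destruct ((0 <=? i) && (i <? Z.of_nat (length x))) eqn:E; [|reflexivity].
  apply andb_true_iff in E as [E1 E2]. apply Z.leb_le in E1. apply Z.ltb_lt in E2. lia.
Qed.

Lemma patch_inside u x n : (n < length x)%nat -> patch u x (Z.of_nat n) = nth n x false.
Proof.
  intros Hn. unfold patch. rewrite Nat2Z.id.
  destruct ((0 <=? Z.of_nat n) && (Z.of_nat n <? Z.of_nat (length x))) eqn:E; [reflexivity|].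
  apply andb_false_iff in E as [E | E]; [apply Z.leb_gt in E | apply Z.ltb_ge in E]; lia.
Qed.

Lemma patch_eq_periodic_const u x b :
  (forall i, periodic u i = b) -> ~ In (negb b) x -> forall i, patch u x i = periodic u i.
Proof.
  intros Hb Hx i. unfold patch.
  destruct ((0 <=? i) && (i <? Z.of_nat (length x))) eqn:E; [|reflexivity].
  apply andb_true_iff in E as [E1 E2]. apply Z.leb_le in E1. apply Z.ltb_lt in E2.
  rewrite Hb. destruct (nth (Z.to_nat i) x false) eqn:F; destruct b; try reflexivity;
    exfalso; apply Hx; simpl; rewrite <- F; apply nth_In; lia.
Qed.

Lemma SInv_of_patch_eq N u x : (forall i, patch u x i = periodic u i) -> SInv N u x.
Proof.
  intros Hx. exists 0. intros t. exists 0. intros i Hd. exfalso.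
  apply Hd. symmetry. now apply eca_iter_ext.
Qed.

Lemma not_SInv_of_spreading N u x :
  (forall t : nat, exists i j, Z.of_nat t <= j - i /\
     eca_iter N t (periodic u) i <> eca_iter N t (patch u x) i /\
     eca_iter N t (periodic u) j <> eca_iter N t (patch u x) j) ->
  ~ SInv N u x.
Proof.
  intros Hspread [w Hw].
  destruct (Hspread (Z.to_nat w)) as [i [j [Hij [Hi Hj]]]].
  destruct (Hw (Z.to_nat w)) as [a Ha].
  specialize (Ha i Hi) as Hi'. specialize (Ha j Hj) as Hj'. lia.
Qed.


Lemma exists_least_true (g : Z -> bool) lo k :
  g k = true -> (forall i, i < lo -> g i = false) ->
  exists l, g l = true /\ forall i, i < l -> g i = false.
Proof.
  intros Hk Hlo.
  enough (H : forall n k, Z.to_nat (k - lo) = n -> g k = true ->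
            exists l, g l = true /\ forall i, i < l -> g i = false) by exact (H _ k eq_refl Hk).
  clear k Hk. intros n. induction n as [n IH] using lt_wf_ind. intros k Hn Hk.
  destruct (classic (exists j, j < k /\ g j = true)) as [[j [Hjk Hj]] | Hnone].
  - assert (lo <= j) by (destruct (Z_lt_le_dec j lo); [rewrite Hlo in Hj by lia; discriminate | lia]).
    exact (IH (Z.to_nat (j - lo)) ltac:(lia) j eq_refl Hj).
  - exists k. split; [exact Hk|]. intros i Hi.
    destruct (g i) eqn:Hg; [exfalso; eauto | reflexivity].
Qed.

Lemma exists_greatest_true (g : Z -> bool) hi k :
  g k = true -> (forall i, hi < i -> g i = false) ->
  exists r, g r = true /\ forall i, r < i -> g i = false.
Proof.
  intros Hk Hhi.
  destruct (exists_least_true (fun i => g (- i)) (- hi) (- k)) as [l [Hl Hbelow]].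
  - now rewrite Z.opp_involutive.
  - intros i Hi. apply Hhi. lia.
  - exists (- l). split; [exact Hl|]. intros i Hi.
    rewrite <- (Z.opp_involutive i). apply Hbelow. lia.
Qed.

Definition support_hull (X : config) (l r : Z) : Prop :=
  (forall i, i < l \/ r < i -> X i = false) /\ X l = true /\ X r = true.

Lemma eca156_support_hull X l r :
  support_hull X l r -> support_hull (eca 156 X) l (r + 1).
Proof.
  intros [Hout [Hl Hr]]. unfold support_hull, eca. split; [|split].
  - intros i Hi. rewrite local_rule_156, (Hout i), (Hout (i - 1)) by lia. reflexivity.
  - rewrite local_rule_156, Hl, (Hout (l - 1)) by lia. reflexivity.
  - rewrite local_rule_156. replace (r + 1 - 1) with r by lia.
    rewrite Hr, (Hout (r + 1)), (Hout (r + 1 + 1)) by lia. reflexivity.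
Qed.

Lemma eca156_iter_support_hull X l r t :
  support_hull X l r -> support_hull (eca_iter 156 t X) l (r + Z.of_nat t).
Proof.
  intros H. induction t as [|t IH]; [now rewrite Z.add_0_r|].
  rewrite eca_iterS. replace (r + Z.of_nat (S t)) with (r + Z.of_nat t + 1) by lia.
  now apply eca156_support_hull.
Qed.

Lemma eca156_finite_support_spreads X lo hi k :
  (forall i, i < lo \/ hi < i -> X i = false) -> X k = true ->
  forall t : nat, exists i j, Z.of_nat t <= j - i /\
    eca_iter 156 t X i = true /\ eca_iter 156 t X j = true.
Proof.
  intros Hout Hk t.
  destruct (exists_least_true X lo k Hk) as [l [Hl Hbelow]]; [intros; apply Hout; lia|].
  destruct (exists_greatest_true X hi k Hk) as [r [Hr Habove]]; [intros; apply Hout; lia|].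
  assert (Hlr : l <= r) by (destruct (Z_lt_le_dec r l); [rewrite Hbelow in Hr by lia; discriminate | lia]).
  destruct (eca156_iter_support_hull X l r t) as [_ [Hlt Hrt]].
  { split; [|tauto]. intros i [Hi | Hi]; auto. }
  exists l, (r + Z.of_nat t). repeat split; auto. lia.
Qed.


Lemma SInv156_const_background u x b :
  (forall i, periodic u i = b) -> (SInv 156 u x <-> ~ In (negb b) x).
Proof.
  intros Hb. split; [|intros Hx; apply SInv_of_patch_eq; exact (patch_eq_periodic_const u x b Hb Hx)].
  intros HS Hin. apply (not_SInv_of_spreading 156 u x); [|exact HS].
  apply In_nth with (d := false) in Hin as [n [Hn Hnth]].
  assert (Hbg : forall t i, eca_iter 156 t (periodic u) i = b).
  { intros t i. rewrite (eca_iter_ext 156 t _ (fun _ => b) Hb). apply eca156_iter_const. }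
  assert (Hout : forall i, i < 0 \/ Z.of_nat (length x) <= i -> patch u x i = b)
    by (intros i Hi; rewrite patch_outside; auto).
  assert (Hk : patch u x (Z.of_nat n) = negb b) by (rewrite patch_inside; auto).
  intros t. destruct b.
  - (* on the background 1, the perturbation spreads to the left, seen through the mirror *)
    destruct (eca156_finite_support_spreads (mirror_neg (patch u x))
                (1 - Z.of_nat (length x)) 0 (- Z.of_nat n)) with (t := t)
      as [i [j [Hij [Hi Hj]]]].
    + intros i Hi. unfold mirror_neg. rewrite Hout by lia. reflexivity.
    + unfold mirror_neg. rewrite Z.opp_involutive, Hk. reflexivity.
    + rewrite eca156_iter_mirror_neg in Hi, Hj. unfold mirror_neg in Hi, Hj.
      apply negb_true_iff in Hi, Hj.
      exists (- j), (- i). rewrite !Hbg, Hi, Hj. repeat split; [lia | discriminate | discriminate].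
  - destruct (eca156_finite_support_spreads (patch u x) 0 (Z.of_nat (length x) - 1)
                (Z.of_nat n)) with (t := t) as [i [j [Hij [Hi Hj]]]].
    + intros i Hi. apply Hout. lia.
    + exact Hk.
    + exists i, j. rewrite !Hbg, Hi, Hj. repeat split; [lia | discriminate | discriminate].
Qed.


Definition wall (X : config) (c : Z) : Prop := X c = false /\ X (c + 1) = true.

Lemma eca156_wall X c : wall X c -> wall (eca 156 X) c.
Proof.
  intros [H0 H1]. unfold wall, eca. rewrite !local_rule_156.
  replace (c + 1 - 1) with c by lia. rewrite H0, H1, andb_false_r. split; reflexivity.
Qed.

Definition agree_outside (a b : Z) (X Y : config) : Prop :=
  forall i, i <= a + 1 \/ b <= i -> X i = Y i.

(* The walls at [a] and [b] are fixed in both configurations, so each cell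
   outside (a+1, b) only sees cells on which [X] and [Y] agree. *)
Lemma eca156_agree_outside_walls a b X Y :
  wall X a -> wall X b -> agree_outside a b X Y ->
  agree_outside a b (eca 156 X) (eca 156 Y).
Proof.
  intros Ha Hb Hagr.
  assert (HaY : wall Y a) by (destruct Ha; split; rewrite <- Hagr by lia; assumption).
  assert (HbY : wall Y b) by (destruct Hb; split; rewrite <- Hagr by lia; assumption).
  destruct (eca156_wall X a Ha), (eca156_wall X b Hb),
           (eca156_wall Y a HaY), (eca156_wall Y b HbY).
  intros i Hi.
  destruct (Z.eq_dec i (a + 1)); [subst; congruence|].
  destruct (Z.eq_dec i b); [subst; congruence|].
  destruct (Z.eq_dec i (b + 1)); [subst; congruence|].
  unfold eca. rewrite (Hagr (i - 1)), (Hagr i), (Hagr (i + 1)) by lia. reflexivity.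
Qed.

Lemma eca156_iter_agree_outside_walls a b X Y t :
  wall X a -> wall X b -> agree_outside a b X Y ->
  agree_outside a b (eca_iter 156 t X) (eca_iter 156 t Y).
Proof.
  intros Ha Hb Hagr.
  enough (H : wall (eca_iter 156 t X) a /\ wall (eca_iter 156 t X) b /\
              agree_outside a b (eca_iter 156 t X) (eca_iter 156 t Y)) by apply H.
  induction t as [|t [IHa [IHb IHagr]]]; [auto|].
  rewrite !eca_iterS. auto using eca156_wall, eca156_agree_outside_walls.
Qed.

Lemma exists_wall_between (X : config) n p :
  X p = false -> X (p + Z.of_nat n) = true -> exists m, wall X m.
Proof.
  revert p. induction n as [|n IH]; intros p Hp Hq.
  - rewrite Z.add_0_r in Hq. congruence.
  - destruct (X (p + 1)) eqn:E; [now exists p|].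
    apply (IH (p + 1) E). now replace (p + 1 + Z.of_nat n) with (p + Z.of_nat (S n)) by lia.
Qed.

Lemma periodic_add_period u i k :
  u <> nil -> periodic u (i + Z.of_nat (length u) * k) = periodic u i.
Proof.
  intros Hu. unfold periodic. rewrite (Z.mul_comm _ k), Z.mod_add; [reflexivity|].
  destruct u; [congruence|]. simpl. lia.
Qed.

Lemma periodic_wall_add_period u m k :
  u <> nil -> wall (periodic u) m -> wall (periodic u) (m + Z.of_nat (length u) * k).
Proof.
  intros Hu [H0 H1]. split; [now rewrite periodic_add_period|].
  replace (m + Z.of_nat (length u) * k + 1) with (m + 1 + Z.of_nat (length u) * k) by lia.
  now rewrite periodic_add_period.
Qed.

Lemma periodic_has_wall u :
  u <> nil -> (forall b, exists i, periodic u i = b) -> exists m, wall (periodic u) m.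
Proof.
  intros Hu Hboth. destruct (Hboth false) as [p Hp], (Hboth true) as [q Hq].
  set (L := Z.of_nat (length u)).
  assert (HL : 1 <= L) by (unfold L; destruct u; [congruence | simpl; lia]).
  set (q' := q + L * (Z.abs (p - q) + 1)).
  apply (exists_wall_between _ (Z.to_nat (q' - p)) p Hp).
  replace (p + Z.of_nat (Z.to_nat (q' - p))) with q' by (unfold q'; nia).
  unfold q', L. now rewrite periodic_add_period.
Qed.

Lemma SInv156_nonconst_background u x :
  u <> nil -> (forall b, exists i, periodic u i = b) -> SInv 156 u x.
Proof.
  intros Hu Hboth. destruct (periodic_has_wall u Hu Hboth) as [m Hm].
  set (L := Z.of_nat (length u)).
  assert (HL : 1 <= L) by (unfold L; destruct u; [congruence | simpl; lia]).
  set (a := m + L * - (Z.abs m + 2)).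
  set (b := m + L * (Z.abs m + Z.of_nat (length x))).
  assert (Ha : a + 1 < 0) by (unfold a; nia).
  assert (Hb : Z.of_nat (length x) <= b) by (unfold b; nia).
  assert (Hagr : agree_outside a b (periodic u) (patch u x))
    by (intros i Hi; symmetry; apply patch_outside; lia).
  exists (b - a). intros t. exists (a + 2). intros i Hd.
  pose proof (eca156_iter_agree_outside_walls a b _ _ t
                (periodic_wall_add_period u m _ Hu Hm)
                (periodic_wall_add_period u m _ Hu Hm) Hagr) as Ht.
  destruct (Z_le_gt_dec i (a + 1)); [exfalso; apply Hd, Ht; lia|].
  destruct (Z_le_gt_dec b i); [exfalso; apply Hd, Ht; lia|].
  lia.
Qed.


Lemma CC_le_ext P Q n C : (forall z, P z <-> Q z) -> CC_le P n C -> CC_le Q n C.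
Proof.
  intros HPQ HP i Hi. destruct (HP i Hi) as [p [Hd Hrun]].
  exists p. split; [exact Hd|]. intros x y Hx Hy. rewrite Hrun by assumption. apply HPQ.
Qed.

Lemma CC_le_trivial P n C : (forall z, P z) -> CC_le P n C.
Proof.
  intros HP i _. exists (Leaf true). split; [simpl; lia|].
  intros x y _ _. simpl. split; auto.
Qed.

Lemma CC_le_not_In b n : CC_le (fun z => ~ In b z) n 2.
Proof.
  intros i _.
  set (lacks_b := fun z : list bool => if in_dec bool_dec b z then false else true).
  exists (AliceNode lacks_b (BobNode lacks_b (Leaf true) (Leaf false)) (Leaf false)).
  split; [simpl; lia|].
  intros x y _ _. rewrite in_app_iff. unfold lacks_b. simpl.
  destruct (in_dec bool_dec b x), (in_dec bool_dec b y); simpl;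
    split; intros; try discriminate; tauto.
Qed.

Theorem mainTheorem11 :
  forall u : list bool, u <> nil ->
    exists C : nat, forall n : nat, CC_le (SInv 156%Z u) n C.
Proof.
  intros u Hu. exists 2%nat. intros n.
  destruct (classic (exists b, forall i, periodic u i = b)) as [[b Hb] | Hnonconst].
  - apply (CC_le_ext (fun z => ~ In (negb b) z)); [|apply CC_le_not_In].
    intros z. symmetry. exact (SInv156_const_background u z b Hb).
  - apply CC_le_trivial. intros z. apply SInv156_nonconst_background; [exact Hu|].
    intros b. apply NNPP. intros Hno. apply Hnonconst. exists (negb b).
    intros i. destruct (periodic u i) eqn:E, b; try reflexivity; exfalso; eauto.
Qed.
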